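(* Let $G$ be a graph containing a cycle, and let $k\ge 0$ and $r\le \log_2(g(G)-2)-1$. Then every graph in $M^k_r(G)$ is a tree.
   Context: $g(G)$ is the girth of $G$. Colors are red, blue, green. A $k$-precolored graph is a finite graph together with an assignment of colors to at most $k$ of its vertices. The game $\mathcal{G}^k_r(H)$ on a $k$-precolored graph $H$ starts from the given precoloring and lasts $r$ rounds; in each round Spoiler may erase the colors of some currently colored vertices and then selects a vertex, which Duplicator colors with one of the three colors; after each round at most $k$ vertices may be colored. Duplicator wins if the initial partial coloring and the partial coloring after each round are proper; otherwise Spoiler wins. A subgraph $H'$ of a $k$-precolored graph $H$ is a subgraph of the underlying graph in which every vertex colored in $H'$ has the same color in $H$; it is proper if $H'\ne H$ as precolored graphs. $M^k_r$ is the family of all $k$-precolored graphs $H$ such that Spoiler wins $\mathcal{G}^k_r(H)$ while Duplicator wins $\mathcal{G}^k_r(K)$ for every proper subgraph $K$ of $H$. $M^k_r(G)$ is the set of those members of $M^k_r$ whose underlying uncolored graph is isomorphic to a subgraph of $G$. *)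

From mathcomp Require Import all_boot.
Set Implicit Arguments. Unset Strict Implicit. Unset Printing Implicit Defensive.

Inductive color := Red | Blue | Green.

Definition pcoloring (V : Type) := V -> option color.

Definition ncolored (V : finType) (p : pcoloring V) : nat :=
  #|[pred x | isSome (p x)]|.

Definition proper_pc (V : Type) (adj : rel V) (p : pcoloring V) : Prop :=
  forall x y a, adj x y -> p x = Some a -> p y = Some a -> False.

Definition erasure (V : Type) (q p : pcoloring V) : Prop :=
  forall x, q x = p x \/ q x = None.

Definition recolor (V : eqType) (q : pcoloring V) (v : V) (a : color) : pcoloring V :=
  fun x => if x == v then Some a else q x.

(* Duplicator wins the game G^k_r starting from the partial coloring p:
   p is proper, and for every Spoiler move of the next round (erase some
   colors, then select a vertex v, such that at most k vertices are colored
   after the round) Duplicator has a color keeping a winning position. *)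
Fixpoint dup_wins (V : finType) (adj : rel V) (k r : nat) (p : pcoloring V) : Prop :=
  proper_pc adj p /\
  match r with
  | 0 => True
  | r'.+1 =>
      forall (q : pcoloring V) (v : V),
        erasure q p ->
        #|[pred x | (x == v) || isSome (q x)]| <= k ->
        exists a : color, dup_wins adj k r' (recolor q v a)
  end.

Record pgraph := PGraph {
  pV : finType;
  padj : rel pV;
  pcol : pcoloring pV }.
Arguments padj : clear implicits.
Arguments pcol : clear implicits.

Definition k_precolored (k : nat) (H : pgraph) : Prop :=
  symmetric (padj H) /\ irreflexive (padj H) /\ ncolored (pcol H) <= k.

Definition Dwins (k r : nat) (H : pgraph) : Prop := dup_wins (padj H) k r (pcol H).
Definition Swins (k r : nat) (H : pgraph) : Prop := ~ Dwins k r H.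

Definition psubgraph (K H : pgraph) (f : pV K -> pV H) : Prop :=
  injective f /\
  (forall x y, padj K x y -> padj H (f x) (f y)) /\
  (forall x a, pcol K x = Some a -> pcol H (f x) = Some a).

Definition psub_full (K H : pgraph) (f : pV K -> pV H) : Prop :=
  bijective f /\
  (forall x y, padj H (f x) (f y) -> padj K x y) /\
  (forall x, pcol H (f x) = pcol K x).

Definition in_M (k r : nat) (H : pgraph) : Prop :=
  k_precolored k H /\ Swins k r H /\
  forall (K : pgraph) (f : pV K -> pV H),
    k_precolored k K -> psubgraph f -> ~ psub_full f -> Dwins k r K.

(* Membership in M^k_r(G): the underlying uncolored graph of H is isomorphic
   to a subgraph of G. *)
Definition in_MG (k r : nat) (T : finType) (e : rel T) (H : pgraph) : Prop :=
  in_M k r H /\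
  exists f : pV H -> T, injective f /\ (forall x y, padj H x y -> e (f x) (f y)).

Definition has_cycle_len (T : finType) (e : rel T) (n : nat) : bool :=
  (2 < n) && [exists t : n.-tuple T, uniq t && cycle e t].

Definition has_cycle (T : finType) (e : rel T) : Prop :=
  exists n, has_cycle_len e n.

(* Girth: the least length of a cycle (cycles have length <= #|T|);
   equals #|T|.+1 if there is no cycle. *)
Definition girth (T : finType) (e : rel T) : nat :=
  find (has_cycle_len e) (iota 0 #|T|.+1).

Definition is_tree (V : finType) (adj : rel V) : Prop :=
  0 < #|V| /\ (forall x y, connect adj x y) /\ ~ has_cycle adj.

From mathcomp Require Import all_boot.
From mathcomp Require Import zify.
From Stdlib Require Import Classical FunctionalExtensionality.
Set Implicit Arguments. Unset Strict Implicit. Unset Printing Implicit Defensive.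

(* The heart of the proof is a localization property of the game: whenever
   Spoiler wins G^k_r from a partial coloring, he already wins it on an
   induced subgraph of diameter at most 2^r (measured inside the subgraph).
   This is proved by induction on r: an improper coloring is lost on one
   edge; otherwise Spoiler has a move on a vertex v such that each of the
   three answers loses locally on some set W_a; if some W_a misses v it
   already witnesses the loss, and otherwise Spoiler repeats his move on the
   union of the W_a, a set of diameter 2 * 2^r through v.

   For H in M^k_r(G), minimality forces the localizing set to be all of H,
   so H is connected of diameter at most m = 2^r. A graph of diameter m with
   a cycle of length at least m + 2 has a cycle of length at most 2m + 1
   (shortcut an arc of m + 1 edges by a shortest path); since H embeds in G,
   whose girth is at least 2m + 2, H has no cycle at all. *)

Lemma card_inj_le (V1 V2 : finType) (f : V1 -> V2) (P1 : pred V1) (P2 : pred V2) :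
  injective f -> (forall x1, P1 x1 -> P2 (f x1)) -> #|P1| <= #|P2|.
Proof.
move=> inj P12; rewrite -(card_imset P1 inj); apply: subset_leq_card.
by apply/subsetP => x2 /imsetP [x1 Px1 ->]; apply: P12.
Qed.

Lemma card_inj_ge (V1 V2 : finType) (f : V1 -> V2) (P1 : pred V1) (P2 : pred V2) :
  injective f -> (forall x2, P2 x2 -> exists2 x1, P1 x1 & f x1 = x2) -> #|P2| <= #|P1|.
Proof.
move=> inj P12; rewrite -(card_imset P1 inj); apply: subset_leq_card.
by apply/subsetP => x2 /P12 [x1 Px1 <-]; apply: imset_f.
Qed.

Section GameMonotonicity.
Variable k : nat.

Lemma erasure_some (V : Type) (q p : pcoloring V) x a :
  erasure q p -> q x = Some a -> p x = Some a.
Proof. by move=> qp; case: (qp x) => ->. Qed.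

Lemma erasure_trans (V : Type) (q' q p : pcoloring V) :
  erasure q' q -> erasure q p -> erasure q' p.
Proof. by move=> q'q qp x; case: (q'q x) => ->; [exact: qp | right]. Qed.

Lemma proper_erasure (V : Type) (adj : rel V) (p q : pcoloring V) :
  proper_pc adj p -> erasure q p -> proper_pc adj q.
Proof.
move=> pp qp x y a xy qx qy.
exact: pp x y a xy (erasure_some qp qx) (erasure_some qp qy).
Qed.

Lemma dup_wins_proper (V : finType) (adj : rel V) r p :
  dup_wins adj k r p -> proper_pc adj p.
Proof. by case: r => [[]|r []]. Qed.

Lemma dup_wins_erasure (V : finType) (adj : rel V) r p q :
  dup_wins adj k r p -> erasure q p -> dup_wins adj k r q.
Proof.
elim: r p q => [|r IH] p q /= [pp win] qp; split; try exact: proper_erasure pp qp.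
- done.
- by move=> q' v q'q card_q'; exact: win q' v (erasure_trans q'q qp) card_q'.
Qed.

Lemma dup_wins_pred (V : finType) (adj : rel V) r p :
  dup_wins adj k r.+1 p -> dup_wins adj k r p.
Proof.
elim: r p => [|r IH] p /= [pp win]; split=> //.
by move=> q v qp card_q; have [a wa] := win q v qp card_q; exists a; exact: IH.
Qed.

Lemma dup_wins_empty (V : finType) (adj : rel V) r p :
  (V -> False) -> dup_wins adj k r p.
Proof. by move=> V0; elim: r p => [|r IH] p; split=> // x; case: (V0 x). Qed.

(* Duplicator's strategy on a graph transfers to any graph embedded in it:
   Spoiler's moves are pushed forward along the embedding f, and Duplicator's
   answers are pulled back. *)
Lemma dup_wins_embed (V1 V2 : finType) (adj1 : rel V1) (adj2 : rel V2)
    (f : V1 -> V2) :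
  injective f -> (forall x y, adj1 x y -> adj2 (f x) (f y)) ->
  forall r (p2 : pcoloring V2), dup_wins adj2 k r p2 ->
  dup_wins adj1 k r (fun x => p2 (f x)).
Proof.
move=> f_inj f_hom; elim=> [|r IH] p2 /= [pp win].
  by split=> // x y a xy; exact: pp _ _ _ (f_hom _ _ xy).
split=> [x y a xy|q1 v1 q1p card_q1]; first exact: pp _ _ _ (f_hom _ _ xy).
pose q2 : pcoloring V2 :=
  fun x2 => if [pick x1 | f x1 == x2] is Some x1 then q1 x1 else None.
have q2f x1 : q2 (f x1) = q1 x1.
  by rewrite /q2; case: pickP => [y /eqP /f_inj -> //|/(_ x1)]; rewrite eqxx.
have q2p : erasure q2 p2.
  move=> x2; rewrite /q2; case: pickP => [y /eqP <-|_]; last by right.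
  exact: q1p y.
have card_q2 : #|[pred x | (x == f v1) || isSome (q2 x)]| <= k.
  apply: leq_trans card_q1; apply: (card_inj_ge f_inj) => x2 /orP [/eqP ->|].
    by exists v1; rewrite /= ?eqxx.
  rewrite /q2; case: pickP => [y /eqP <- y_col|//]; exists y => //.
  by rewrite /= y_col orbT.
have [a wa] := win q2 (f v1) q2p card_q2; exists a.
suff -> : recolor q1 v1 a = (fun x => recolor q2 (f v1) a (f x)) by exact: IH.
by apply: functional_extensionality => x; rewrite /recolor (inj_eq f_inj) q2f.
Qed.

End GameMonotonicity.

Section InducedSubgraphs.
Variables (V : finType) (adj : rel V).

Definition sadj (W : {set V}) : rel {x : V | x \in W} := fun x y => adj (val x) (val y).
Definition restr (W : {set V}) (p : pcoloring V) : pcoloring {x : V | x \in W} :=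
  fun x => p (val x).
Arguments sadj : clear implicits.
Arguments restr : clear implicits.

Lemma dup_wins_subset k r (W U : {set V}) (p : pcoloring V) :
  W \subset U -> dup_wins (sadj U) k r (restr U p) -> dup_wins (sadj W) k r (restr W p).
Proof.
move=> WU win.
pose f (x : {x | x \in W}) : {x | x \in U} := exist _ (val x) (subsetP WU _ (valP x)).
have f_inj : injective f by move=> x y /(congr1 val) /= /val_inj.
exact: (dup_wins_embed (adj1 := sadj W) f_inj (fun x y xy => xy) win).
Qed.

Definition within (W : {set V}) (m : nat) (x y : V) : Prop :=
  exists s, [/\ path adj x s, last x s = y, all [in W] s & size s <= m].

Definition diamW (W : {set V}) (m : nat) : Prop :=
  forall x y, x \in W -> y \in W -> within W m x y.

Lemma within_mono (W U : {set V}) m n x y :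
  W \subset U -> m <= n -> within W m x y -> within U n x y.
Proof.
move=> WU mn [s [pth lst inW sz]]; exists s; split=> //; last exact: leq_trans mn.
by apply: sub_all inW => z; apply: (subsetP WU).
Qed.

Lemma within_cat (W : {set V}) m n x y z :
  within W m x y -> within W n y z -> within W (m + n) x z.
Proof.
move=> [s [ps ls As zs]] [t [pt lt At zt]]; exists (s ++ t); split.
- by rewrite cat_path ps ls pt.
- by rewrite last_cat ls lt.
- by rewrite all_cat As At.
- by rewrite size_cat leq_add.
Qed.

End InducedSubgraphs.
Arguments sadj {V} adj W.
Arguments restr {V} W p.

Section Localization.
Variables (V : finType) (adj : rel V) (k : nat).
Hypothesis adj_sym : symmetric adj.

Definition local_loss (r : nat) (p : pcoloring V) (W : {set V}) : Prop :=
  diamW adj W (2 ^ r) /\ ~ dup_wins (sadj adj W) k r (restr W p).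

(* An improper coloring is already lost on a single edge. *)
Lemma improper_local_loss r p : ~ proper_pc adj p -> exists W, local_loss r p W.
Proof.
move=> not_proper.
have [x [y [a [xy px py]]]] : exists x y a, [/\ adj x y, p x = Some a & p y = Some a].
  apply: NNPP => no_edge; apply: not_proper => x y a xy px py.
  by apply: no_edge; exists x, y, a.
have xW : x \in [set x; y] by rewrite !inE eqxx.
have yW : y \in [set x; y] by rewrite !inE eqxx orbT.
exists [set x; y]; split.
- move=> u w uW wW; apply: (within_mono (subxx _) (expn_gt0 2 r)).
  move: uW wW; rewrite !inE => /orP[]/eqP-> /orP[]/eqP->.
  + by exists [::].
  + by exists [:: y]; rewrite /= xy yW.
  + by exists [:: x]; rewrite /= adj_sym xy xW.
  + by exists [::].
- move=> /dup_wins_proper proper_W.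
  exact: (proper_W (exist _ x xW) (exist _ y yW) a xy px py).
Qed.

Lemma spoiler_move r p :
  proper_pc adj p -> ~ dup_wins adj k r.+1 p ->
  exists q v, [/\ erasure q p, #|[pred x | (x == v) || isSome (q x)]| <= k &
                  forall a, ~ dup_wins adj k r (recolor q v a)].
Proof.
move=> pp lost; apply: NNPP => no_move; apply: lost; split=> // q v qp card_q.
apply: NNPP => no_answer; apply: no_move; exists q, v; split=> // a wa.
by apply: no_answer; exists a.
Qed.

Lemma restr_recolor_notin (W : {set V}) q v a :
  v \notin W -> restr W (recolor q v a) = restr W q.
Proof.
move=> vW; apply: functional_extensionality => -[x xW]; rewrite /restr /recolor /=.
by case: eqP => // xv; rewrite -xv xW in vW.
Qed.

Lemma restr_recolor_in (W : {set V}) q v a (vW : v \in W) :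
  recolor (restr W q) (exist _ v vW) a = restr W (recolor q v a).
Proof. by apply: functional_extensionality => -[x xW]; rewrite /restr /recolor. Qed.

Lemma local_loss_avoiding r p q v a (W : {set V}) :
  erasure q p -> v \notin W -> local_loss r (recolor q v a) W -> local_loss r.+1 p W.
Proof.
move=> qp vW [diam lost]; split.
  move=> x y xW yW; apply: within_mono (subxx _) _ (diam x y xW yW).
  by rewrite leq_exp2l.
move=> /dup_wins_pred win; apply: lost; rewrite restr_recolor_notin //.
by apply: dup_wins_erasure win _ => -[x xW]; exact: qp.
Qed.

Section Union.
Variable W : color -> {set V}.
Let U := W Red :|: W Blue :|: W Green.

Lemma subset_union3 a : W a \subset U.
Proof.
case: a; [exact: subset_trans (subsetUl _ _) (subsetUl _ _)
         | exact: subset_trans (subsetUr _ _) (subsetUl _ _) | exact: subsetUr].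
Qed.

Lemma mem_union3 x : x \in U -> exists a, x \in W a.
Proof. by case/setUP => [/setUP [] | ] xW; [exists Red | exists Blue | exists Green]. Qed.

Lemma diamW_union3 m v :
  (forall a, v \in W a) -> (forall a, diamW adj (W a) m) -> diamW adj U (m + m).
Proof.
move=> vW diam x y /mem_union3 [a xW] /mem_union3 [b yW].
apply: within_cat (within_mono (subset_union3 a) (leqnn m) (diam a x v xW (vW a)))
                  (within_mono (subset_union3 b) (leqnn m) (diam b v y (vW b) yW)).
Qed.

(* If every answer to Spoiler's move on v loses locally on a set W a
   containing v, then the position before the move is lost on their union:
   Spoiler makes the same move inside the union. *)
Lemma local_loss_union r p q v :
  erasure q p -> #|[pred x | (x == v) || isSome (q x)]| <= k ->
  (forall a, v \in W a) -> (forall a, local_loss r (recolor q v a) (W a)) ->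
  local_loss r.+1 p U.
Proof.
move=> qp card_q vW lost; split.
  by rewrite expnS mul2n -addnn; apply: diamW_union3 vW _ => a; case: (lost a).
have vU : v \in U by apply: (subsetP (subset_union3 Red)).
move=> [_ win].
have qUp : erasure (restr U q) (restr U p) by move=> x; exact: qp (val x).
have card_qU : #|[pred x | (x == exist _ v vU) || isSome (restr U q x)]| <= k.
  apply: leq_trans card_q; apply: (card_inj_le val_inj) => x /orP [/eqP -> | col].
    by rewrite /= eqxx.
  by rewrite /= col orbT.
have [a wa] := win _ _ qUp card_qU.
rewrite restr_recolor_in in wa.
by case: (lost a) => _; apply; apply: dup_wins_subset (subset_union3 a) wa.
Qed.

End Union.

Lemma spoiler_localizes r p : ~ dup_wins adj k r p -> exists W, local_loss r p W.
Proof.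
elim: r p => [|r IH] p lost; have [pp|] := classic (proper_pc adj p);
  try exact: improper_local_loss.
  by case: lost.
have [q [v [qp card_q answers]]] := spoiler_move pp lost.
have [WR lostR] := IH _ (answers Red).
have [WB lostB] := IH _ (answers Blue).
have [WG lostG] := IH _ (answers Green).
pose W a := match a with Red => WR | Blue => WB | Green => WG end.
have lostW a : local_loss r (recolor q v a) (W a) by case: a.
have [[a vWa] | all_in] := classic (exists a, v \notin W a).
  by exists (W a); exact: local_loss_avoiding qp vWa (lostW a).
exists (W Red :|: W Blue :|: W Green); apply: (local_loss_union qp card_q) => // a.
by apply: NNPP => vWa; apply: all_in; exists a; apply/negP.
Qed.

End Localization.

Section ShortCycles.
Variables (V : finType) (adj : rel V).
Hypothesis adj_sym : symmetric adj.

Lemma path_take x s n : path adj x s -> path adj x (take n s).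
Proof. by rewrite -{1}(cat_take_drop n s) cat_path => /andP []. Qed.

(* Two simple paths from a to the same endpoint with different first steps
   close a cycle: follow the first path up to its first vertex w on the
   second one, then return along the second path from w back to a. *)
Lemma diverging_paths_cycle a x P y Q :
  path adj a (x :: P) -> path adj a (y :: Q) ->
  uniq (a :: x :: P) -> uniq (a :: y :: Q) -> last x P = last y Q -> x != y ->
  exists c : seq V, [/\ 2 < size c, size c <= (size P).+1 + (size Q).+1,
                        uniq c & cycle adj c].
Proof.
set PP := x :: P; set QQ := y :: Q => pP pQ uP uQ eL nxy.
have [aPP uPP] : a \notin PP /\ uniq PP by case/andP: uP.
have [aQQ uQQ] : a \notin QQ /\ uniq QQ by case/andP: uQ.
have hasQ : has [in QQ] PP.
  by apply/hasP; exists (last x P); rewrite ?mem_last //= eL mem_last.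
set i := find [in QQ] PP; set w := nth a PP i; set j := index w QQ.
have iP : i < size PP by rewrite -has_find.
have wQ : w \in QQ by exact: (nth_find a hasQ).
have jQ : j < size QQ by rewrite index_mem.
set Q1 := take j QQ.
have QQe : take j.+1 QQ = rcons Q1 w by rewrite (take_nth a jQ) nth_index.
have PPe : take i.+1 PP = rcons (take i PP) w by rewrite (take_nth a iP).
have wQ1 : w \notin Q1.
  have := uQQ; rewrite -(cat_take_drop j QQ) cat_uniq => /and3P [_ /hasPn H _].
  by apply: H; rewrite (drop_nth a jQ) nth_index // mem_head.
have before_w z : z \in take i PP -> z \notin QQ.
  move=> /(nthP a) [l]; rewrite size_take iP => li <-.
  by rewrite nth_take // (before_find a li).
exists (a :: take i PP ++ w :: rev Q1); split.
- rewrite /= size_cat /= size_rev size_take iP.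
  have [i0|] := posnP i; last by generalize (size Q1) i; clear; lia.
  have : j != 0 by rewrite /j /w i0 /= [y == x]eq_sym (negbTE nxy).
  by rewrite /Q1 size_take jQ; generalize i j i0; clear; lia.
- rewrite /= size_cat /= size_rev size_take iP /Q1 size_take jQ.
  by move: iP jQ; rewrite /PP /QQ /=; generalize (size P) (size Q) i j; clear; lia.
- rewrite /= mem_cat negb_or inE negb_or mem_rev cat_uniq /= rev_uniq.
  apply/and5P; split.
  + apply/and3P; split.
    * exact: contra (@mem_take _ _ _ _) aPP.
    * by apply: contraNneq aPP => ->; rewrite mem_nth.
    * exact: contra (@mem_take _ _ _ _) aQQ.
  + exact: take_uniq.
  + rewrite negb_or; apply/andP; split; first by apply/negP => /before_w; rewrite wQ.
    apply/hasPn => z; rewrite mem_rev => zQ1; apply/negP => /before_w.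
    by rewrite (mem_take zQ1).
  + by rewrite mem_rev.
  + exact: take_uniq.
- rewrite /cycle rcons_cat rcons_cons -cat_rcons -PPe cat_path path_take //.
  rewrite PPe last_rcons -rev_cons.
  have pQ1 : path adj a (rcons Q1 w) by rewrite -QQe; apply: path_take.
  have := rev_path adj a (rcons Q1 w); rewrite last_rcons belast_rcons => ->.
  by rewrite (eq_path (e' := adj)) // => u v; rewrite adj_sym.
Qed.

Lemma distinct_paths_cycle a P Q :
  path adj a P -> path adj a Q -> uniq (a :: P) -> uniq (a :: Q) ->
  last a P = last a Q -> P != Q ->
  exists c : seq V, [/\ 2 < size c, size c <= size P + size Q, uniq c & cycle adj c].
Proof.
elim: P a Q => [|x P IH] a [|y Q] //= pP pQ uP uQ eL nPQ.
- by case/andP: uQ; rewrite eL mem_last.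
- by case/andP: uP; rewrite -eL mem_last.
have [exy|nxy] := eqVneq x y; last exact: (diverging_paths_cycle pP pQ uP uQ eL nxy).
subst y.
case/andP: pP => _ pP; case/andP: pQ => _ pQ.
case/andP: uP => _ uP; case/andP: uQ => _ uQ.
rewrite eqseq_cons eqxx /= in nPQ.
have [c [c2 cs cu cc]] := IH x Q pP pQ uP uQ eL nPQ.
by exists c; split=> //; apply: leq_trans cs _; rewrite leq_add.
Qed.

Definition diameter_le (m : nat) : Prop :=
  forall x y, exists s, [/\ path adj x s, last x s = y & size s <= m].

(* In a graph of diameter at most m, every cycle of length at least m+2 is
   shortcut to a cycle of length at most 2m+1: compare an arc of m+1 edges
   with a shortest path between its endpoints. *)
Lemma diameter_short_cycle m (t : seq V) :
  diameter_le m -> m.+2 <= size t -> uniq t -> cycle adj t ->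
  exists c : seq V, [/\ 2 < size c, size c <= m + m.+1, uniq c & cycle adj c].
Proof.
case: t => [//|a s] diam szt ut ct.
set Q := take m.+1 s.
have szQ : size Q = m.+1 by rewrite size_takel.
have pQ : path adj a Q by apply: path_take; move: ct; rewrite /cycle rcons_path => /andP [].
have uQ : uniq (a :: Q).
  case/andP: ut => aS uS; rewrite /= take_uniq // andbT.
  by apply: contra aS; apply: mem_take.
have [s1 [p1 l1 z1]] := diam a (last a Q).
case: (shortenP p1) l1 => P pP uP sP l1.
have szP : size P <= m.
  by apply: leq_trans z1; apply: uniq_leq_size sP; case/andP: uP.
have nPQ : P != Q by apply: contraTneq szP => ->; rewrite szQ ltnn.
have [c [c2 cs cu cc]] := distinct_paths_cycle pP pQ uP uQ l1 nPQ.
by exists c; split=> //; apply: leq_trans cs _; rewrite szQ leq_add2r.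
Qed.

End ShortCycles.

Lemma girth_le_cycle (T : finType) (e : rel T) (V : finType) (adj : rel V)
    (f : V -> T) :
  injective f -> (forall x y, adj x y -> e (f x) (f y)) ->
  forall c : seq V, 2 < size c -> uniq c -> cycle adj c -> girth e <= size c.
Proof.
move=> f_inj f_hom c c2 uc cc.
have uf : uniq (map f c) by rewrite map_inj_uniq.
have cf : cycle e (map f c) by rewrite cycle_map; apply: sub_cycle cc => x y; exact: f_hom.
have cycle_c : has_cycle_len e (size c).
  apply/andP; split=> //; apply/existsP; exists (map_tuple f (in_tuple c)).
  by rewrite /= uf cf.
have sT : size c <= #|T| by rewrite -(size_map f) -(card_uniqP uf) max_card.
rewrite /girth leqNgt; apply/negP => /(before_find 0).
by rewrite nth_iota // add0n cycle_c.
Qed.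

Lemma acyclic_small_diameter (T : finType) (e : rel T) (V : finType) (adj : rel V)
    (f : V -> T) m :
  injective f -> (forall x y, adj x y -> e (f x) (f y)) -> symmetric adj ->
  diameter_le adj m -> m + m + 2 <= girth e -> ~ has_cycle adj.
Proof.
move=> f_inj f_hom adj_sym diam large [n /andP [n2 /existsP [t /andP [ut ct]]]].
have girth_t := girth_le_cycle f_inj f_hom; rewrite -(size_tuple t) in n2.
have long_t : m.+2 <= size t by move: (girth_t _ n2 ut ct) large; clear; lia.
have [c [c2 cs cu cc]] := diameter_short_cycle adj_sym diam long_t ut ct.
by move: (girth_t _ c2 cu cc) large cs; clear; lia.
Qed.

Definition induced (H : pgraph) (W : {set pV H}) : pgraph :=
  PGraph (sadj (padj H) W) (restr W (pcol H)).
Arguments induced : clear implicits.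

Lemma minimal_loss_full k r (H : pgraph) (W : {set pV H}) :
  k_precolored k H ->
  (forall (K : pgraph) (f : pV K -> pV H),
      k_precolored k K -> psubgraph f -> ~ psub_full f -> Dwins k r K) ->
  ~ Dwins k r (induced H W) -> forall x, x \in W.
Proof.
move=> [H_sym [H_irr H_col]] minimal lost x; apply: NNPP => xW; apply: lost.
apply: (minimal (induced H W) val).
- split; [by move=> u v; exact: H_sym | split; first by move=> u; exact: H_irr].
  by apply: leq_trans H_col; apply: (card_inj_le val_inj).
- by split; [exact: val_inj | split].
- by move=> [[g _ gK] _]; apply: xW; rewrite -(gK x); exact: valP.
Qed.

Lemma spoiler_wins_nonempty k r (H : pgraph) : Swins k r H -> 0 < #|pV H|.
Proof.
move=> lost; apply/card_gt0P; apply: NNPP => empty; apply: lost.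
by apply: dup_wins_empty => x; apply: empty; exists x.
Qed.

Lemma girth_bound n r : r.+1 <= trunc_log 2 (n - 2) -> 2 ^ r + 2 ^ r + 2 <= n.
Proof.
move=> r_le; have [n2|n2] := posnP (n - 2); first by rewrite n2 trunc_log0 in r_le.
have := leq_trans (leq_pexp2l (isT : 0 < 2) r_le) (trunc_logP (isT : 1 < 2) n2).
by rewrite expnS mul2n -addnn; clear; lia.
Qed.

Theorem lemma7 (T : finType) (e : rel T) (k r : nat) :
  symmetric e -> irreflexive e -> has_cycle e ->
  r.+1 <= trunc_log 2 (girth e - 2) ->
  forall H : pgraph, in_MG k r e H -> is_tree (padj H).
Proof.
move=> _ _ _ r_le H [[H_prec [lost minimal]] [f [f_inj f_hom]]].
have H_sym : symmetric (padj H) by case: H_prec.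
have [W [diam_W lostW]] := spoiler_localizes H_sym lost.
have W_full := minimal_loss_full H_prec minimal lostW.
have diam : diameter_le (padj H) (2 ^ r).
  by move=> x y; have [s [? ? _ ?]] := diam_W x y (W_full x) (W_full y); exists s.
split; [exact: spoiler_wins_nonempty lost | split].
- by move=> x y; apply/connectP; have [s [? ? _]] := diam x y; exists s.
- exact: acyclic_small_diameter f_inj f_hom H_sym diam (girth_bound r_le).
Qed.
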